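(* Let $(\underline F_X,\overline F_X)$ and $(\underline F_Y,\overline F_Y)$ be $p$-boxes, $F_Z$ a distribution function, and let $F_X,F_Y$ be distribution functions with $\underline F_X\le F_X\le\overline F_X$, $\underline F_Y\le F_Y\le\overline F_Y$. Put $F=F_XF_Z$, $G=F_YF_Z$, $K=F_Y+F_Z-F_YF_Z$ and $\underline F=\underline F_XF_Z$, $\overline F=\overline F_XF_Z$, $\underline G=\underline F_YF_Z$, $\overline G=\overline F_YF_Z$, $\underline K=\underline F_Y+F_Z-\underline F_YF_Z$, $\overline K=\overline F_Y+F_Z-\overline F_YF_Z$. Let $\underline\phi,\underline\psi,\underline\chi$ be the pointwise infima of the functions $\phi$, $\psi$, $\chi$ (respectively) associated to $(\underline F_X,\underline F_Y,F_Z)$, and $\overline\phi,\overline\psi,\overline\chi$ the pointwise suprema of those associated to $(\overline F_X,\overline F_Y,F_Z)$. Then: (i) $\underline F\le F\le\overline F$, $\underline G\le G\le\overline G$, $\underline K\le K\le\overline K$; (ii) there exist $\phi,\psi,\chi:[0,1]\to[0,1]$ associated to $(F_X,F_Y,F_Z)$ (i.e. to $F$, $G$, $K$) with $\underline\phi\le\phi\le\overline\phi$, $\underline\psi\le\psi\le\overline\psi$, $\underline\chi\le\chi\le\overline\chi$.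
   Context: A distribution function is a non-decreasing map $\mathbb R\to[0,1]$ (no continuity assumed) with limits $0$ at $-\infty$ and $1$ at $+\infty$; a $p$-box is a pair of distribution functions $(\underline F,\overline F)$ with $\underline F\le\overline F$. For distribution functions $(A,B,C)$ (playing the roles of $F_X,F_Y,F_Z$): $\phi$ is associated if $\phi$ is non-decreasing, $\phi(0)=0$, $\phi(1)=1$, $\phi(u)/u$ non-increasing on $(0,1]$, and $\phi(A(x)C(x))=A(x)$ whenever $A(x)C(x)>0$; $\psi$ is associated if it satisfies the same conditions with $B$ in place of $A$; $\chi$ is associated if $\chi$ is non-decreasing, $\chi(0)=0$, $\chi(1)=1$, $\frac{1-\chi(w)}{w-\chi(w)}$ non-increasing on $[0,1]$ (values in $[1,\infty]$), and $\chi(B(y)+C(y)-B(y)C(y))=B(y)$ whenever $B(y)+C(y)-B(y)C(y)<1$. *)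

From HB Require Import structures.
From mathcomp Require Import all_boot all_order all_algebra.
From mathcomp Require Import all_classical all_reals all_analysis.
Set Implicit Arguments. Unset Strict Implicit. Unset Printing Implicit Defensive.
Import Order.TTheory GRing.Theory Num.Theory.
Import numFieldNormedType.Exports.
Local Open Scope classical_set_scope.
Local Open Scope ring_scope.

(* A distribution function: non-decreasing R -> [0,1] (no continuity),
   limit 0 at -oo and 1 at +oo. *)
Definition distribution_function {R : realType} (F : R -> R) : Prop :=
  [/\ {homo F : x y / x <= y},
      (forall x, 0 <= F x <= 1),
      F x @[x --> -oo] --> (0 : R) &
      F x @[x --> +oo] --> (1 : R)].

Definition pbox {R : realType} (Fl Fu : R -> R) : Prop :=
  [/\ distribution_function Fl, distribution_function Fu &
      forall x, Fl x <= Fu x].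

(* Common conditions on a function phi : [0,1] -> [0,1] (represented as
   R -> R; only its values on [0,1] matter). *)
Definition unit_map {R : realType} (f : R -> R) : Prop :=
  [/\ (forall u, 0 <= u <= 1 -> 0 <= f u <= 1),
      (forall u v, 0 <= u -> u <= v -> v <= 1 -> f u <= f v),
      f 0 = 0 & f 1 = 1].

Definition phi_cond {R : realType} (A C : R -> R) (phi : R -> R) : Prop :=
  [/\ unit_map phi,
      (forall u v, 0 < u -> u <= v -> v <= 1 -> phi v / v <= phi u / u) &
      (forall x, 0 < A x * C x -> phi (A x * C x) = A x)].

Definition assoc_phi {R : realType} (A B C : R -> R) (phi : R -> R) : Prop :=
  phi_cond A C phi.

Definition assoc_psi {R : realType} (A B C : R -> R) (psi : R -> R) : Prop :=
  phi_cond B C psi.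

Definition chi_ratio {R : realType} (chi : R -> R) (w : R) : \bar R :=
  if w - chi w == 0 then +oo%E else ((1 - chi w) / (w - chi w))%:E.

(* chi associated to (A,B,C): the ratio takes values in [1,+oo] and is
   non-increasing (on [0,1)), and chi(B y + C y - B y C y) = B y whenever
   B y + C y - B y C y < 1. *)
Definition assoc_chi {R : realType} (A B C : R -> R) (chi : R -> R) : Prop :=
  [/\ unit_map chi,
      (forall w, 0 <= w < 1 -> (1 <= chi_ratio chi w)%E),
      (forall w1 w2, 0 <= w1 -> w1 <= w2 -> w2 < 1 ->
         (chi_ratio chi w2 <= chi_ratio chi w1)%E) &
      (forall y, B y + C y - B y * C y < 1 ->
         chi (B y + C y - B y * C y) = B y)].

Definition pinf {R : realType} (P : (R -> R) -> Prop) (u : R) : \bar R :=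
  ereal_inf [set (f u)%:E | f in P].
Definition psup {R : realType} (P : (R -> R) -> Prop) (u : R) : \bar R :=
  ereal_sup [set (f u)%:E | f in P].

From HB Require Import structures.
From mathcomp Require Import all_boot all_order all_algebra.
From mathcomp Require Import all_classical all_reals all_analysis.
From mathcomp Require Import ring lra.
Set Implicit Arguments.
Unset Strict Implicit.
Unset Printing Implicit Defensive.
Import Order.TTheory GRing.Theory Num.Theory.
Local Open Scope classical_set_scope.
Local Open Scope ring_scope.

(* For unit-valued comonotone a, c the function
     least_phi a c u = sup ({u} ∪ {min (a x) (u / c x) | a x * c x > 0})
   is associated to (a, c), and it is pointwise non-decreasing in a.  Mirroring it
   (w |-> 1 - phi (1 - w)) and feeding it (1 - b, 1 - c) gives a chi associated to
   (b, c) that is non-decreasing in b.  Taking these canonical functions for F_X,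
   F_Y and for the p-box bounds, the ones for F_X, F_Y are sandwiched between the
   ones for the bounds, which belong to the families whose infimum and supremum
   appear in (ii).  Part (i) is the monotonicity of y |-> y z and y |-> y + z - y z
   for z in [0, 1]. *)

Lemma mulr_between (R : numDomainType) (a b c z : R) :
  0 <= z -> a <= b <= c -> a * z <= b * z <= c * z.
Proof. by move=> z0 /andP[ab bc]; rewrite !ler_wpM2r. Qed.

Lemma prob_sum_between (R : realDomainType) (a b c z : R) :
  z <= 1 -> a <= b <= c -> a + z - a * z <= b + z - b * z <= c + z - c * z.
Proof. by move=> z1 /andP[ab bc]; apply/andP; split; nra. Qed.

Lemma min_div_cross (R : realFieldType) (a c u v : R) :
  0 <= a -> 0 < c -> 0 <= u -> u <= v ->
  Order.min a (v / c) * u <= Order.min a (u / c) * v.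
Proof.
move=> a0 c0 u0 uv; have [au|ua] := leP a (u / c).
- apply: le_trans (ler_wpM2l a0 uv).
  by rewrite ler_wpM2r // ge_min lexx.
- rewrite (_ : u / c * v = v / c * u); last by ring.
  by rewrite ler_wpM2r // ge_min lexx orbT.
Qed.

Section AssociatedFunctions.
Variable R : realType.
Implicit Types (a b c f g : R -> R) (u v w : R).

Definition unit_valued f := forall x, 0 <= f x <= 1.

Definition comonotone a c := forall x y,
  (a x <= a y /\ c x <= c y) \/ (a y <= a x /\ c y <= c x).

Definition compl_fun f : R -> R := fun x => 1 - f x.

Definition mirror f : R -> R := fun w => 1 - f (1 - w).

Definition ratio_nonincreasing f :=
  forall u v, 0 < u -> u <= v -> v <= 1 -> f v / v <= f u / u.

Lemma homo_comonotone a c :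
  {homo a : x y / x <= y} -> {homo c : x y / x <= y} -> comonotone a c.
Proof.
by move=> ha hc x y; have [xy|/ltW yx] := leP x y; [left|right]; split;
  [exact: ha|exact: hc|exact: ha|exact: hc].
Qed.

Lemma df_unit_valued f : distribution_function f -> unit_valued f.
Proof. by case. Qed.

Lemma df_comonotone a c :
  distribution_function a -> distribution_function c -> comonotone a c.
Proof. by case=> ha _ _ _ [hc _ _ _]; apply: homo_comonotone. Qed.

Lemma compl_unit_valued f : unit_valued f -> unit_valued (compl_fun f).
Proof.
by move=> hf x; have /andP[? ?] := hf x; rewrite /compl_fun; apply/andP; split; lra.
Qed.

Lemma compl_comonotone a c : comonotone a c -> comonotone (compl_fun a) (compl_fun c).
Proof.
by move=> h x y; rewrite /compl_fun; case: (h x y) => -[? ?]; [right|left]; split; lra.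
Qed.

Lemma ratio_nonincreasing_cross f u v : ratio_nonincreasing f ->
  0 < u -> u <= v -> v <= 1 -> f v * u <= f u * v.
Proof.
move=> hf u0 uv v1; have v0 := lt_le_trans u0 uv.
by have := hf u v u0 uv v1; rewrite ler_pdivlMr // mulrAC ler_pdivrMr.
Qed.

Lemma ratio_nonincreasing_ge_id f u : ratio_nonincreasing f -> f 1 = 1 ->
  0 < u <= 1 -> u <= f u.
Proof.
move=> hf f1 /andP[u0 u1].
by have := ratio_nonincreasing_cross hf u0 u1 (lexx 1); rewrite f1 mul1r mulr1.
Qed.

Section LeastPhi.
Variables a c : R -> R.
Hypotheses (a_unit : unit_valued a) (c_unit : unit_valued c).

(* Every phi associated to (a, c) satisfies phi u >= u (ratio condition at v = 1)
   and phi u >= min (a x) (u / c x) (monotonicity above a x * c x, the ratio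
   condition below), so least_phi is the least associated function. *)
Definition least_phi_set u : set R :=
  [set u] `|` [set Order.min (a x) (u / c x) | x in [set x | 0 < a x * c x]].

Definition least_phi u : R := sup (least_phi_set u).

Lemma gt0_of_mul_gt0 x : 0 < a x * c x -> 0 < c x.
Proof.
have /andP[a0 _] := a_unit x; have /andP[c0 _] := c_unit x.
by rewrite mulr_ge0_gt0 // => /andP[].
Qed.

Lemma le_least_phi u e : least_phi_set u e -> e <= least_phi u.
Proof.
move=> he; apply: sup_upper_bound => //; split; first by exists u; left.
exists (Order.max u 1) => _ [->|[x _ <-]]; rewrite le_max ?lexx //.
by have /andP[_ a1] := a_unit x; rewrite !ge_min a1 !orbT.
Qed.

Lemma ge_least_phi u z : ubound (least_phi_set u) z -> least_phi u <= z.
Proof. by apply: ge_sup; exists u; left. Qed.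

Lemma least_phi_ge_id u : u <= least_phi u.
Proof. by apply: le_least_phi; left. Qed.

Lemma least_phi_homo u v : u <= v -> least_phi u <= least_phi v.
Proof.
move=> uv; apply: ge_least_phi => _ [->|[x hx <-]].
  exact: le_trans uv (least_phi_ge_id v).
have hmem : least_phi_set v (Order.min (a x) (v / c x)) by right; exists x.
apply: le_trans (le_least_phi hmem).
by rewrite le_min2 // ler_wpM2r // invr_ge0 ltW // gt0_of_mul_gt0.
Qed.

Lemma least_phi_le1 u : u <= 1 -> least_phi u <= 1.
Proof.
move=> u1; apply: ge_least_phi => _ [->//|[x _ <-]].
by have /andP[_ a1] := a_unit x; rewrite ge_min a1.
Qed.

Lemma least_phi0 : least_phi 0 = 0.
Proof.
apply/eqP; rewrite eq_le least_phi_ge_id andbT.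
by apply: ge_least_phi => _ [->//|[x _ <-]]; rewrite mul0r ge_min lexx orbT.
Qed.

Lemma least_phi1 : least_phi 1 = 1.
Proof. by apply/eqP; rewrite eq_le least_phi_ge_id least_phi_le1. Qed.

Lemma least_phi_cross u v : 0 < u -> u <= v ->
  least_phi v * u <= least_phi u * v.
Proof.
move=> u0 uv; have v0 := lt_le_trans u0 uv.
rewrite -ler_pdivlMr //; apply: ge_least_phi => _ [->|[x hx <-]].
  by rewrite ler_pdivlMr // mulrC ler_wpM2r ?(ltW v0) ?least_phi_ge_id.
rewrite ler_pdivlMr //; apply: le_trans (min_div_cross _ (gt0_of_mul_gt0 hx) _ uv) _.
- by have /andP[] := a_unit x.
- exact: ltW.
apply: ler_wpM2r; first exact: ltW v0.
by apply: le_least_phi; right; exists x.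
Qed.

Lemma least_phi_unit_map : unit_map least_phi.
Proof.
split.
- move=> u /andP[u0 u1].
  by rewrite least_phi_le1 // andbT (le_trans u0 (least_phi_ge_id u)).
- by move=> u v _ uv _; apply: least_phi_homo.
- exact: least_phi0.
- exact: least_phi1.
Qed.

Lemma least_phi_ratio : ratio_nonincreasing least_phi.
Proof.
move=> u v u0 uv _; have v0 := lt_le_trans u0 uv.
by rewrite ler_pdivrMr // mulrAC ler_pdivlMr // least_phi_cross.
Qed.

(* Comonotonicity is what rules out a point x with a x > a y but c x < c y. *)
Lemma least_phi_interpolates y : comonotone a c -> 0 < a y * c y ->
  least_phi (a y * c y) = a y.
Proof.
move=> hco hy; have cy0 := gt0_of_mul_gt0 hy.
have /andP[ay0 _] := a_unit y; have /andP[_ cy1] := c_unit y.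
apply/eqP; rewrite eq_le; apply/andP; split.
  apply: ge_least_phi => _ [->|[x hx <-]].
    by rewrite -[leRHS]mulr1 ler_wpM2l.
  rewrite ge_min; case: (hco x y) => [[-> //] | [_ cyx]].
  by rewrite ler_pdivrMr ?gt0_of_mul_gt0 // ler_wpM2l // orbT.
have hmem : least_phi_set (a y * c y) (Order.min (a y) (a y * c y / c y)).
  by right; exists y.
by apply: le_trans (le_least_phi hmem); rewrite mulfK ?gt_eqF // minxx.
Qed.

End LeastPhi.

Lemma least_phi_assoc a c : unit_valued a -> unit_valued c -> comonotone a c ->
  phi_cond a c (least_phi a c).
Proof.
move=> ha hc hco; split; first exact: least_phi_unit_map.
- exact: least_phi_ratio.
- by move=> x; apply: least_phi_interpolates.
Qed.

Lemma least_phi_mono a1 a2 c u :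
  unit_valued a1 -> unit_valued a2 -> unit_valued c -> (forall x, a1 x <= a2 x) ->
  least_phi a1 c u <= least_phi a2 c u.
Proof.
move=> ha1 ha2 hc a12; apply: ge_least_phi => // _ [->|[x hx <-]].
  exact: least_phi_ge_id.
have hx2 : 0 < a2 x * c x.
  by apply: lt_le_trans hx _; rewrite ler_wpM2r //; have /andP[] := hc x.
have hmem : least_phi_set a2 c u (Order.min (a2 x) (u / c x)) by right; exists x.
by apply: le_trans (le_least_phi ha2 hmem); rewrite le_min2.
Qed.

Lemma least_phi_between a1 a a2 c u :
  unit_valued a1 -> unit_valued a -> unit_valued a2 -> unit_valued c ->
  (forall x, a1 x <= a x <= a2 x) ->
  least_phi a1 c u <= least_phi a c u <= least_phi a2 c u.
Proof.
move=> h1 h h2 hc b; apply/andP; split; apply: least_phi_mono => // x;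
  by have /andP[] := b x.
Qed.

Lemma mirror_unit_map g : unit_map g -> unit_map (mirror g).
Proof.
case=> g01 ghomo g0 g1; split; rewrite /mirror.
- move=> w /andP[w0 w1]; have /andP[? ?] : 0 <= g (1 - w) <= 1 by apply: g01; lra.
  by apply/andP; split; lra.
- by move=> u v u0 uv v1; rewrite lerB // ghomo //; lra.
- by rewrite subr0 g1 subrr.
- by rewrite subrr g0 subr0.
Qed.

Lemma chi_ratio_mirror g w : chi_ratio (mirror g) w =
  if g (1 - w) == 1 - w then +oo%E else (g (1 - w) / (g (1 - w) - (1 - w)))%:E.
Proof.
rewrite /chi_ratio /mirror (_ : 1 - (1 - _) = g (1 - w)); last by ring.
by rewrite (_ : w - _ = g (1 - w) - (1 - w)) ?subr_eq0 //; ring.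
Qed.

Lemma mirror_chi_ratio_ge1 g w : ratio_nonincreasing g -> g 1 = 1 ->
  0 <= w < 1 -> (1 <= chi_ratio (mirror g) w)%E.
Proof.
move=> hg g1 /andP[w0 w1]; rewrite chi_ratio_mirror.
have hs := ratio_nonincreasing_ge_id hg g1 (_ : 0 < 1 - w <= 1).
case: eqP => [_|/eqP ne]; first exact: leey.
have pos : 0 < g (1 - w) - (1 - w).
  by rewrite lt_neqAle eq_sym subr_eq0 ne subr_ge0 hs //; lra.
by rewrite lee_fin ler_pdivlMr // mul1r; lra.
Qed.

Lemma mirror_chi_ratio_antitone g w1 w2 : ratio_nonincreasing g -> g 1 = 1 ->
  0 <= w1 -> w1 <= w2 -> w2 < 1 ->
  (chi_ratio (mirror g) w2 <= chi_ratio (mirror g) w1)%E.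
Proof.
move=> hg g1 w10 w12 w21; rewrite !chi_ratio_mirror.
set s1 := 1 - w1; set s2 := 1 - w2.
have s20 : 0 < s2 by rewrite /s2; lra.
have hs1 : s1 <= g s1 by apply: ratio_nonincreasing_ge_id => //; rewrite /s1; lra.
have hs2 : s2 <= g s2 by apply: ratio_nonincreasing_ge_id => //; rewrite /s2; lra.
have cross : g s1 * s2 <= g s2 * s1.
  by apply: ratio_nonincreasing_cross => //; rewrite /s1 /s2; lra.
case: (g s1 =P s1) => [_|ne1]; first exact: leey.
case: (g s2 =P s2) => [e2|ne2].
  by exfalso; apply: ne1; rewrite e2 in cross; nra.
have p1 : 0 < g s1 - s1.
  by rewrite lt_neqAle eq_sym subr_eq0 subr_ge0 hs1 andbT; apply/eqP.
have p2 : 0 < g s2 - s2.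
  by rewrite lt_neqAle eq_sym subr_eq0 subr_ge0 hs2 andbT; apply/eqP.
by rewrite lee_fin ler_pdivrMr // mulrAC ler_pdivlMr //; nra.
Qed.

Lemma mirror_assoc_chi A b c g : phi_cond (compl_fun b) (compl_fun c) g ->
  assoc_chi A b c (mirror g).
Proof.
case=> gmap hg ginterp; have g1 : g 1 = 1 by case: gmap.
split.
- exact: mirror_unit_map.
- by move=> w; apply: mirror_chi_ratio_ge1.
- by move=> w1 w2; apply: mirror_chi_ratio_antitone.
move=> y hy; have := ginterp y; rewrite /compl_fun /mirror.
have -> : 1 - (b y + c y - b y * c y) = (1 - b y) * (1 - c y) by ring.
by move=> -> //; [ring | nra].
Qed.

(* chi is associated to (b, c) exactly when mirror chi is associated, as a phi, to
   (1 - b, 1 - c); mirror being an involution, this is the greatest associated chi. *)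
Definition greatest_chi b c : R -> R := mirror (least_phi (compl_fun b) (compl_fun c)).

Lemma greatest_chi_assoc A b c : unit_valued b -> unit_valued c -> comonotone b c ->
  assoc_chi A b c (greatest_chi b c).
Proof.
move=> hb hc hco; apply: mirror_assoc_chi; apply: least_phi_assoc.
- exact: compl_unit_valued.
- exact: compl_unit_valued.
- exact: compl_comonotone.
Qed.

Lemma greatest_chi_mono b1 b2 c w :
  unit_valued b1 -> unit_valued b2 -> unit_valued c -> (forall x, b1 x <= b2 x) ->
  greatest_chi b1 c w <= greatest_chi b2 c w.
Proof.
move=> hb1 hb2 hc b12; rewrite /greatest_chi /mirror lerB //.
apply: least_phi_mono; try exact: compl_unit_valued.
by move=> x; rewrite /compl_fun lerB.
Qed.

Lemma greatest_chi_between b1 b b2 c w :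
  unit_valued b1 -> unit_valued b -> unit_valued b2 -> unit_valued c ->
  (forall x, b1 x <= b x <= b2 x) ->
  greatest_chi b1 c w <= greatest_chi b c w <= greatest_chi b2 c w.
Proof.
move=> h1 h h2 hc bnd; apply/andP; split; apply: greatest_chi_mono => // x;
  by have /andP[] := bnd x.
Qed.

Lemma pinf_psup_between (P Q : (R -> R) -> Prop) f g h u :
  P f -> Q g -> f u <= h u <= g u -> (pinf P u <= (h u)%:E <= psup Q u)%E.
Proof.
move=> Pf Qg /andP[fh hg]; apply/andP; split.
- apply: (@le_trans _ _ (f u)%:E); last by rewrite lee_fin.
  by apply: ereal_inf_lbound; exists f.
- apply: (@le_trans _ _ (g u)%:E); first by rewrite lee_fin.
  by apply: ereal_sup_ubound; exists g.
Qed.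

End AssociatedFunctions.

Theorem proposition5 (R : realType)
  (FXl FXu FYl FYu FZ FX FY : R -> R) :
  pbox FXl FXu -> pbox FYl FYu -> distribution_function FZ ->
  distribution_function FX -> distribution_function FY ->
  (forall x, FXl x <= FX x <= FXu x) ->
  (forall x, FYl x <= FY x <= FYu x) ->
  (* (i) *)
  ((forall x, FXl x * FZ x <= FX x * FZ x <= FXu x * FZ x) /\
   (forall x, FYl x * FZ x <= FY x * FZ x <= FYu x * FZ x) /\
   (forall x, FYl x + FZ x - FYl x * FZ x <= FY x + FZ x - FY x * FZ x
              <= FYu x + FZ x - FYu x * FZ x)) /\
  (* (ii) *)
  (exists phi psi chi : R -> R,
     [/\ assoc_phi FX FY FZ phi, assoc_psi FX FY FZ psi,
         assoc_chi FX FY FZ chi &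
      forall u, 0 <= u <= 1 ->
        [/\ (pinf (assoc_phi FXl FYl FZ) u <= (phi u)%:E
               <= psup (assoc_phi FXu FYu FZ) u)%E,
            (pinf (assoc_psi FXl FYl FZ) u <= (psi u)%:E
               <= psup (assoc_psi FXu FYu FZ) u)%E &
            (pinf (assoc_chi FXl FYl FZ) u <= (chi u)%:E
               <= psup (assoc_chi FXu FYu FZ) u)%E]]).
Proof.
move=> [dXl dXu _] [dYl dYu _] dZ dX dY bX bY.
have uZ := df_unit_valued dZ.
have phiA F (dF : distribution_function F) :=
  least_phi_assoc (df_unit_valued dF) uZ (df_comonotone dF dZ).
have chiA F (dF : distribution_function F) :=
  greatest_chi_assoc FX (df_unit_valued dF) uZ (df_comonotone dF dZ).
split.
  split; [|split] => x; have /andP[z0 z1] := uZ x.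
  - exact: mulr_between.
  - exact: mulr_between.
  - exact: prob_sum_between.
exists (least_phi FX FZ), (least_phi FY FZ), (greatest_chi FY FZ).
split; [exact: phiA | exact: phiA | exact: chiA |] => u _.
have uXl := df_unit_valued dXl; have uXu := df_unit_valued dXu.
have uYl := df_unit_valued dYl; have uYu := df_unit_valued dYu.
have uX := df_unit_valued dX; have uY := df_unit_valued dY.
split.
- apply: (pinf_psup_between (f := least_phi FXl FZ) (g := least_phi FXu FZ));
    [exact: phiA | exact: phiA | exact: least_phi_between].
- apply: (pinf_psup_between (f := least_phi FYl FZ) (g := least_phi FYu FZ));
    [exact: phiA | exact: phiA | exact: least_phi_between].
- apply: (pinf_psup_between (f := greatest_chi FYl FZ) (g := greatest_chi FYu FZ));
    [exact: chiA | exact: chiA | exact: greatest_chi_between].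
Qed.
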